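(* Let $(\Gamma,\rho)$ be a voltage graph with $\Gamma=(V,E)$ rooted and voltage group $G$ a finite group, with local groups $\{G_i\}$ and directed local groups $\{G_i^*\}$, and let $\overline\Gamma$ be its derived graph. Then every (weakly) connected component of $\overline\Gamma$ is rooted if and only if $G_i^*=G_i$ for some root $v_i$ of $\Gamma$; moreover, $G_i^*=G_i$ holds for some root of $\Gamma$ if and only if it holds for every root of $\Gamma$.
   Context: $\Gamma$ is a simple digraph, $e_{ij}$ the edge $v_i\to v_j$; $\rho:E\to G$. A semi-walk is $w=v_{i_1}a_1\dots a_{n-1}v_{i_n}$ with each $a_j\in\{e_{i_ji_{j+1}},e_{i_{j+1}i_j}\}$; closed if $v_{i_1}=v_{i_n}$; a walk if every $a_j=e_{i_ji_{j+1}}$; a path is a walk with distinct vertices. Net voltage $f(w)=\bar\rho(a_1)\cdots\bar\rho(a_{n-1})$, $\bar\rho(a_j)=\rho(a_j)$ for forward edges and $\rho(a_j)^{-1}$ for backward ones ($f=\mathbf 1$ on a single vertex). Local group $G_i=\{f(w): w$ closed semi-walk at $v_i\}$, directed local group $G_i^*=\{f(w): w$ closed walk at $v_i\}$. A digraph is rooted if some vertex (a root) is reachable by a path from every vertex. The derived graph $\overline\Gamma$ has vertex set $G\times V$ (vertices written $[g,v_i]$) and an edge $[g_i,v_i]\to[g_j,v_j]$ iff $e_{ij}\in E$ and $g_j=g_i\cdot\rho(e_{ij})$. Connected components of $\overline\Gamma$ are its maximal weakly connected subgraphs (any two vertices joined by a semi-walk). *)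

From mathcomp Require Import all_boot all_fingroup.
Set Implicit Arguments. Unset Strict Implicit. Unset Printing Implicit Defensive.

Section Digraphs.
Variables (T : finType) (e : rel T).

Fixpoint is_semiwalk (x : T) (s : seq (T * bool)) : Prop :=
  match s with
  | [::] => True
  | (y, b) :: s' => (if b then e x y else e y x) /\ is_semiwalk y s'
  end.

Definition sw_end (x : T) (s : seq (T * bool)) : T := last x (map fst s).

Definition is_walk (x : T) (s : seq (T * bool)) : Prop :=
  is_semiwalk x s /\ all snd s.

Definition wconn (x y : T) : Prop :=
  exists s, is_semiwalk x s /\ sw_end x s = y.

Definition path_in (C : T -> Prop) (x y : T) : Prop :=
  exists s : seq T, [/\ path e x s, uniq (x :: s), last x s = y &
                        forall z, z \in x :: s -> C z].

Definition is_root_in (C : T -> Prop) (r : T) : Prop :=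
  C r /\ forall y, C y -> path_in C y r.

Definition rooted_in (C : T -> Prop) : Prop := exists r, is_root_in C r.

Definition is_root (r : T) : Prop := is_root_in (fun _ => True) r.
Definition rooted : Prop := rooted_in (fun _ => True).

Definition component (x : T) : T -> Prop := wconn x.

End Digraphs.

Section Voltage.
Variables (gT : finGroupType) (V : finType) (e : rel V) (rho : V -> V -> gT).
Local Open Scope group_scope.

Fixpoint net_voltage (x : V) (s : seq (V * bool)) : gT :=
  match s with
  | [::] => 1
  | (y, b) :: s' => (if b then rho x y else (rho y x)^-1) * net_voltage y s'
  end.

Definition local_group (i : V) (g : gT) : Prop :=
  exists s, [/\ is_semiwalk e i s, sw_end i s = i & net_voltage i s = g].

Definition dlocal_group (i : V) (g : gT) : Prop :=
  exists s, [/\ is_walk e i s, sw_end i s = i & net_voltage i s = g].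

Definition local_groups_eq (i : V) : Prop :=
  forall g, dlocal_group i g <-> local_group i g.

Definition derived_rel : rel (gT * V) :=
  fun a b => e a.2 b.2 && (b.1 == a.1 * rho a.2 b.2).

End Voltage.

From mathcomp Require Import all_boot all_fingroup.
Set Implicit Arguments. Unset Strict Implicit. Unset Printing Implicit Defensive.

(* A walk of Γ from u lifts, from any starting point (g, u), to a unique walk
   of the derived graph, ending at (g * voltage, end); a semi-walk lifts to a
   semi-walk in the same way. Hence two vertices (g, r) and (h, r) of a fibre
   are weakly connected iff g^-1 h ∈ G_r, and joined by a directed path iff
   g^-1 h ∈ G_r^*. If r is a root, every vertex has a directed path into the
   fibre over r. So when G_r^* = G_r, inside a component all vertices of the
   fibre over r reach each other, and any one of them is a root of the
   component. Conversely, if the component of (1, r) has a root, it reaches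
   some (m, r); for a closed semi-walk at r of voltage g the vertex (m g^-1, r)
   lies in that component, and its directed path to (m, r) through the root
   projects to a closed walk at r of voltage g. *)

Section Digraphs.
Variables (T : finType) (E : rel T).

Lemma is_semiwalk_cat (x : T) (s t : seq (T * bool)) :
  is_semiwalk E x (s ++ t) <-> is_semiwalk E x s /\ is_semiwalk E (sw_end x s) t.
Proof.
elim: s x => [|[y b] s IHs] x /=; first tauto.
by move: (IHs y); rewrite /sw_end /=; tauto.
Qed.

Lemma sw_end_cat (x : T) (s t : seq (T * bool)) :
  sw_end x (s ++ t) = sw_end (sw_end x s) t.
Proof. by rewrite /sw_end map_cat last_cat. Qed.

Lemma wconn_refl (x : T) : wconn E x x.
Proof. by exists [::]. Qed.

Lemma wconn_trans (x y z : T) : wconn E x y -> wconn E y z -> wconn E x z.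
Proof.
move=> [s [s_sw <-]] [t [t_sw <-]]; exists (s ++ t).
by rewrite sw_end_cat; split => //; apply/is_semiwalk_cat.
Qed.

Lemma wconn_sym (x y : T) : wconn E x y -> wconn E y x.
Proof.
move=> [s [+ <-]]; elim: s x => [|[y' b] s IHs] x /=; first by move=> _; apply: wconn_refl.
move=> [xy' /IHs [t [t_sw t_end]]]; exists (t ++ [:: (x, ~~ b)]).
rewrite sw_end_cat t_end; split=> //; apply/is_semiwalk_cat; split=> //=.
by rewrite t_end; case: b xy'.
Qed.

Lemma path_wconn (x : T) (p : seq T) z : path E x p -> z \in x :: p -> wconn E x z.
Proof.
elim: p x => [|y p IHp] x /=; first by rewrite mem_seq1 => _ /eqP ->; apply: wconn_refl.
case/andP=> Exy y_p; rewrite in_cons => /predU1P [-> | z_p]; first exact: wconn_refl.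
by have [s [s_sw s_end]] := IHp y y_p z_p; exists ((y, true) :: s).
Qed.

Lemma path_in_component (c x : T) (p : seq T) :
  wconn E c x -> path E x p -> path_in E (component E c) x (last x p).
Proof.
move=> cx x_p; case: (shortenP x_p) => p' x_p' p'_uniq _.
exists p'; split=> // z z_p'; exact: wconn_trans cx (path_wconn x_p' z_p').
Qed.

Definition fwd (p : seq T) : seq (T * bool) := [seq (z, true) | z <- p].

Lemma sw_end_fwd (x : T) (p : seq T) : sw_end x (fwd p) = last x p.
Proof. by rewrite /sw_end -map_comp map_id. Qed.

Lemma is_walk_fwd (x : T) (p : seq T) : is_walk E x (fwd p) <-> path E x p.
Proof.
rewrite /is_walk all_map (@eq_all _ _ predT) // all_predT.
suff walkE : is_semiwalk E x (fwd p) <-> path E x p by split=> [[/walkE] | /walkE].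
by elim: p x => [|y p IHp] x //=; split=> [[-> /IHp] | /andP [-> /IHp]].
Qed.

Lemma walk_fwdE (x : T) (s : seq (T * bool)) : is_walk E x s -> s = fwd (map fst s).
Proof. by case=> _; elim: s => [|[y b] s IHs] //= /andP [/= -> /IHs <-]. Qed.

End Digraphs.

Section DerivedGraph.
Variables (gT : finGroupType) (V : finType) (e : rel V) (rho : V -> V -> gT).
Local Open Scope group_scope.
Local Notation D := (derived_rel e rho).

Lemma dlocal_group_local (r : V) (g : gT) :
  dlocal_group e rho r g -> local_group e rho r g.
Proof. by case=> s [[s_sw _] s_end s_volt]; exists s. Qed.

Fixpoint lift (g : gT) (u : V) (p : seq V) : seq (gT * V) :=
  if p is v :: p' then (g * rho u v, v) :: lift (g * rho u v) v p' else [::].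

Lemma lift_path (g : gT) (u : V) (p : seq V) : path e u p -> path D (g, u) (lift g u p).
Proof.
elim: p g u => [|v p IHp] g u //= /andP [euv u_p].
by rewrite /derived_rel /= euv eqxx IHp.
Qed.

Lemma last_lift (g : gT) (u : V) (p : seq V) :
  last (g, u) (lift g u p) = (g * net_voltage rho u (fwd p), last u p).
Proof. by elim: p g u => [|v p IHp] g u /=; rewrite ?mulg1 // IHp mulgA. Qed.

Lemma derived_path_proj (a : gT * V) (q : seq (gT * V)) :
  path D a q -> path e a.2 (map snd q) /\ q = lift a.1 a.2 (map snd q).
Proof.
elim: q a => [|b q IHq] [g u] //= /andP [/andP [eub /eqP b1] /IHq [b_q qE]].
by rewrite eub b_q -b1 {1}qE; case: b b1 {eub b_q qE}.
Qed.

Lemma lift_semiwalk (g : gT) (u : V) (s : seq (V * bool)) : is_semiwalk e u s ->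
  wconn D (g, u) (g * net_voltage rho u s, sw_end u s).
Proof.
elim: s g u => [|[y b] s IHs] g u /=; first by rewrite mulg1 => _; apply: wconn_refl.
move=> [b_edge s_sw]; pose g' := g * (if b then rho u y else (rho y u)^-1).
have [t [t_sw t_end]] := IHs g' y s_sw.
exists ((g', y, b) :: t); rewrite mulgA; split; last by rewrite /sw_end /= in t_end *.
split=> //; rewrite /derived_rel /g' /=.
by case: (b) b_edge => ->; rewrite ?mulgKV eqxx.
Qed.

Lemma derived_semiwalk_proj (a : gT * V) (s : seq ((gT * V) * bool)) :
  is_semiwalk D a s -> exists t, [/\ is_semiwalk e a.2 t,
    sw_end a.2 t = (sw_end a s).2 & (sw_end a s).1 = a.1 * net_voltage rho a.2 t].
Proof.
elim: s a => [|[b bb] s IHs] a /=; first by exists [::]; rewrite mulg1.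
case=> b_edge /IHs [t [t_sw t_end t_volt]]; exists ((b.2, bb) :: t).
rewrite /sw_end /= in t_end t_volt *; rewrite t_volt mulgA.
by case: bb b_edge => /andP [ab /eqP b1]; rewrite b1 ?mulgK.
Qed.

Lemma derived_wconn_fibre (g h : gT) (r : V) :
  wconn D (g, r) (h, r) <-> local_group e rho r (g^-1 * h).
Proof.
split.
  case=> s [/derived_semiwalk_proj [t [t_sw t_end t_volt]] s_end].
  by rewrite s_end /= in t_end t_volt; exists t; rewrite t_volt mulKg.
case=> s [s_sw s_end s_volt]; have := lift_semiwalk g s_sw.
by rewrite s_end s_volt mulKVg.
Qed.

Lemma derived_path_fibre (g h : gT) (r : V) :
  (exists q, path D (g, r) q /\ last (g, r) q = (h, r)) <->
  dlocal_group e rho r (g^-1 * h).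
Proof.
split.
  case=> q [/derived_path_proj [p_path /= qE]]; rewrite qE last_lift.
  case=> <- p_end; exists (fwd (map snd q)).
  by rewrite sw_end_fwd mulKg; split=> //; apply/is_walk_fwd.
case=> s [s_walk s_end s_volt]; have sE := walk_fwdE s_walk.
have p_path : path e r (map fst s) by apply/is_walk_fwd; rewrite -sE.
exists (lift g r (map fst s)); rewrite lift_path // last_lift -sE s_volt mulKVg.
by rewrite -sw_end_fwd -sE s_end.
Qed.

Lemma derived_path_to_root (r : V) (a : gT * V) : is_root e r ->
  exists h q, path D a q /\ last a q = (h, r).
Proof.
case: a => g u [_ /(_ u I) [p [u_p _ p_end _]]].
exists (g * net_voltage rho u (fwd p)), (lift g u p).
by rewrite lift_path // last_lift p_end.
Qed.

Lemma rooted_components (r : V) : is_root e r -> local_groups_eq e rho r ->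
  forall a : gT * V, rooted_in D (component D a).
Proof.
move=> r_root r_eq a; have [k [q [a_q q_end]]] := derived_path_to_root a r_root.
exists (k, r); split; first by rewrite -q_end; apply: path_wconn a_q (mem_last _ _).
move=> b ab; have [h [q' [b_q' q'_end]]] := derived_path_to_root b r_root.
have hk : wconn D (h, r) (k, r).
  rewrite -q'_end -q_end; apply: wconn_trans (path_wconn a_q (mem_last _ _)).
  exact/wconn_sym/(wconn_trans ab)/(path_wconn b_q' (mem_last _ _)).
have [q'' [hk_path q''_end]] :=
  proj2 (derived_path_fibre h k r) (proj2 (r_eq _) (proj1 (derived_wconn_fibre h k r) hk)).
have -> : (k, r) = last b (q' ++ q'') by rewrite last_cat q'_end.
apply: path_in_component ab _.
by rewrite cat_path b_q' q'_end hk_path.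
Qed.

Lemma local_groups_eq_of_rooted (r : V) : is_root e r ->
  rooted_in D (component D (1, r)) -> local_groups_eq e rho r.
Proof.
move=> r_root [[k v] [c_root kv_root]] g; split; first exact: dlocal_group_local.
move=> r_g; have [m [q [kv_q q_end]]] := derived_path_to_root (k, v) r_root.
have c_m : wconn D (1, r) (m, r).
  by rewrite -q_end; apply: wconn_trans c_root (path_wconn kv_q (mem_last _ _)).
have c_mg : wconn D (1, r) (m * g^-1, r).
  apply/(wconn_trans c_m)/wconn_sym/derived_wconn_fibre.
  by rewrite invMg invgK mulgKV.
have [q' [mg_q' _ q'_end _]] := kv_root _ c_mg.
have <- : (m * g^-1)^-1 * m = g by rewrite invMg invgK mulgKV.
apply/derived_path_fibre; exists (q' ++ q).
by rewrite cat_path mg_q' q'_end kv_q last_cat q'_end.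
Qed.

End DerivedGraph.

Theorem theorem3 (gT : finGroupType) (V : finType) (e : rel V)
  (simple : irreflexive e) (rho : V -> V -> gT) :
  rooted e ->
  ((forall x : gT * V,
      rooted_in (derived_rel e rho) (component (derived_rel e rho) x))
   <-> exists i, is_root e i /\ local_groups_eq e rho i)
  /\
  ((exists i, is_root e i /\ local_groups_eq e rho i)
   <-> (forall i, is_root e i -> local_groups_eq e rho i)).
Proof.
move=> [r r_root]; split; split.
- by move=> rooted_comps; exists r; split => //; apply: local_groups_eq_of_rooted.
- by case=> i [i_root i_eq]; apply: rooted_components i_eq.
- case=> i [i_root i_eq] j j_root; apply: local_groups_eq_of_rooted j_root _.
  exact: rooted_components i_eq _.
- by move=> all_eq; exists r; split => //; apply: all_eq.
Qed.
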